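(* For every $n \geq 1$, every $c \in \{1,\ldots,n\}$ and every $p=(p_1,\ldots,p_n) \in (0,1)^n$ with $p_1 + \cdots + p_n \leq 1$, $$\mathbb{E}(T_{c,n}(p)) \geq \mathbb{E}(T_{c,n}(v)) \geq \mathbb{E}(T_{c,n}(u)),$$ where $p_0 = 1 - (p_1 + \cdots + p_n)$, $v = (v_1,\ldots,v_n)$ with $v_i = (1-p_0)/n$, and $u = (1/n,\ldots,1/n)$.
   Context: For a vector $q=(q_1,\ldots,q_n)$ of nonnegative reals with $q_1+\cdots+q_n\le 1$, let $q_0 = 1-(q_1+\cdots+q_n)$; coupons are drawn independently, one at each time $1,2,\ldots$, from $\{0,1,\ldots,n\}$, coupon $i$ with probability $q_i$, and coupon $0$ never belongs to the collection. $T_{c,n}(q)$ is the number of draws needed until $c$ distinct coupons among $\{1,\ldots,n\}$ have first been drawn. *)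

From Stdlib Require Import Reals List Arith Bool.
Import ListNotations.
Open Scope R_scope.

Fixpoint sumR (f : nat -> R) (n : nat) : R :=
  match n with
  | O => 0
  | S m => sumR f m + f (S m)
  end.

(* A probability vector q = (q_1,...,q_n) is a function nat -> R (only the
   values at 1..n matter).  Coupon 0 has probability q_0 = 1 - (q_1+...+q_n). *)
Definition draw_prob (n : nat) (q : nat -> R) (k : nat) : R :=
  if Nat.eqb k 0 then 1 - sumR q n else q k.

Fixpoint words (n t : nat) : list (list nat) :=
  match t with
  | O => [nil]
  | S t' => flat_map (fun w => map (fun k => w ++ [k]) (seq 0 (S n))) (words n t')
  end.

Definition word_prob (n : nat) (q : nat -> R) (w : list nat) : R :=
  fold_right (fun k acc => draw_prob n q k * acc) 1 w.

Definition ndistinct (n : nat) (w : list nat) : nat :=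
  length (filter (fun k => existsb (Nat.eqb k) w) (seq 1 n)).

(* P(T_{c,n}(q) = t): after t draws at least c distinct coupons of {1..n},
   but after t-1 draws fewer than c. *)
Definition prob_T_eq (c n : nat) (q : nat -> R) (t : nat) : R :=
  fold_right Rplus 0
    (map (fun w => if andb (Nat.leb c (ndistinct n w))
                           (Nat.ltb (ndistinct n (removelast w)) c)
                   then word_prob n q w else 0)
         (words n t)).

Definition expected_T_is (c n : nat) (q : nat -> R) (l : R) : Prop :=
  infinite_sum (fun t => INR t * prob_T_eq c n q t) l.

(** P(T > t) is the expectation of the indicator of "fewer than c coupons after
    t draws"; E(T) is the sum of these tails, which decay geometrically by a
    union bound.  Both inequalities already hold tail by tail.  Moving
    probability from the never-collected coupon 0 to a genuine coupon can only
    speed up the collection; doing so one coupon at a time turns v into u.  For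
    p against v, fix two coupons i, j and their total probability a + b = s: by
    induction on t the tail is K + phi(a) + phi(b), with K independent of (a, b)
    and phi in a class of functions that is stable under the recursion
    (nonnegative combinations and z |-> z phi(z)) and for which
    phi(a) + phi(b) decreases as a and b move towards each other.  Finitely many
    such Robin Hood transfers turn p into v. *)

From Stdlib Require Import Reals List Arith Bool Lia Lra Psatz.
From Stdlib Require Import FunctionalExtensionality Classical.
Import ListNotations.
Open Scope R_scope.

Definition lsum {T} (g : T -> R) (l : list T) : R :=
  fold_right (fun x acc => g x + acc) 0 l.

Lemma fold_right_Rplus_map {T} (g : T -> R) l : fold_right Rplus 0 (map g l) = lsum g l.
Proof. induction l as [|x l IH]; simpl; rewrite ?IH; reflexivity. Qed.

Lemma lsum_app {T} (g : T -> R) l1 l2 : lsum g (l1 ++ l2) = lsum g l1 + lsum g l2.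
Proof. induction l1 as [|x l IH]; simpl; [lra|]. rewrite IH; lra. Qed.

Lemma lsum_map {T U} (g : U -> R) (m : T -> U) l : lsum g (map m l) = lsum (fun x => g (m x)) l.
Proof. induction l as [|x l IH]; simpl; rewrite ?IH; reflexivity. Qed.

Lemma lsum_flat_map {T U} (g : U -> R) (h : T -> list U) l :
  lsum g (flat_map h l) = lsum (fun x => lsum g (h x)) l.
Proof. induction l as [|x l IH]; simpl; rewrite ?lsum_app, ?IH; reflexivity. Qed.

Lemma lsum_ext_in {T} (f g : T -> R) l : (forall x, In x l -> f x = g x) -> lsum f l = lsum g l.
Proof. induction l as [|x l IH]; simpl; intros H; auto. rewrite H, IH; auto. Qed.

Lemma lsum_plus {T} (f g : T -> R) l : lsum (fun x => f x + g x) l = lsum f l + lsum g l.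
Proof. induction l as [|x l IH]; simpl; [lra|]. rewrite IH; lra. Qed.

Lemma lsum_scal {T} (c : R) (f : T -> R) l : lsum (fun x => c * f x) l = c * lsum f l.
Proof. induction l as [|x l IH]; simpl; [lra|]. rewrite IH; lra. Qed.

Lemma lsum_opp {T} (f : T -> R) l : lsum (fun x => - f x) l = - lsum f l.
Proof. induction l as [|x l IH]; simpl; [lra|]. rewrite IH; lra. Qed.

Lemma lsum_const {T} (c : R) (l : list T) : lsum (fun _ => c) l = INR (length l) * c.
Proof. induction l as [|x l IH]; simpl lsum; simpl length; [simpl; lra|]. rewrite IH, S_INR; lra. Qed.

Lemma lsum_swap {T U} (f : T -> U -> R) l1 l2 :
  lsum (fun x => lsum (f x) l2) l1 = lsum (fun y => lsum (fun x => f x y) l1) l2.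
Proof.
  induction l1 as [|x l IH]; simpl.
  - rewrite lsum_const; simpl; ring.
  - rewrite IH, <- lsum_plus; reflexivity.
Qed.

Lemma lsum_le {T} (f g : T -> R) l : (forall x, In x l -> f x <= g x) -> lsum f l <= lsum g l.
Proof.
  induction l as [|x l IH]; simpl; intros H; [lra|].
  specialize (IH (fun y Hy => H y (or_intror Hy))). specialize (H x (or_introl eq_refl)). lra.
Qed.

Lemma lsum_nonneg {T} (f : T -> R) l : (forall x, In x l -> 0 <= f x) -> 0 <= lsum f l.
Proof. intros H. rewrite <- (Rmult_0_r (INR (length l))), <- lsum_const. apply lsum_le; auto. Qed.

Lemma lsum_lt_const {T} (f : T -> R) c l x0 :
  (forall x, In x l -> f x <= c) -> In x0 l -> f x0 < c -> lsum f l < INR (length l) * c.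
Proof.
  induction l as [|x l IH]; intros H Hin Hlt; [contradiction|].
  simpl length; simpl lsum; rewrite S_INR. destruct Hin as [<-|Hin].
  - assert (Hl : lsum f l <= lsum (fun _ => c) l) by (apply lsum_le; simpl in H; auto).
    rewrite lsum_const in Hl. lra.
  - specialize (IH (fun y Hy => H y (or_intror Hy)) Hin Hlt).
    specialize (H x (or_introl eq_refl)). lra.
Qed.

Lemma lsum_seq1 f n : lsum f (seq 1 n) = sumR f n.
Proof.
  induction n as [|n IH]; [reflexivity|].
  rewrite seq_S, lsum_app, IH. simpl. replace (1 + n)%nat with (S n) by lia. lra.
Qed.

Lemma sumR_const a n : sumR (fun _ => a) n = INR n * a.
Proof. induction n as [|n IH]; simpl sumR; [simpl; ring|]. rewrite IH, S_INR. ring. Qed.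

Lemma lsum_remove (g : nat -> R) l i : NoDup l -> In i l ->
  lsum g l = g i + lsum g (filter (fun x => negb (Nat.eqb x i)) l).
Proof.
  induction l as [|a l IH]; simpl; intros Hnd Hin; [contradiction|].
  inversion Hnd as [|? ? Hal Hnd']; subst. destruct Hin as [<-|Hin].
  - rewrite Nat.eqb_refl; simpl. f_equal. f_equal. symmetry. apply forallb_filter_id.
    apply forallb_forall. intros x Hx. apply negb_true_iff, Nat.eqb_neq. congruence.
  - destruct (Nat.eqb_spec a i); subst; [contradiction|]. simpl.
    rewrite (IH Hnd' Hin). lra.
Qed.

Definition others (n i j : nat) : list nat :=
  filter (fun x => negb (Nat.eqb x j)) (filter (fun x => negb (Nat.eqb x i)) (seq 0 (S n))).

Lemma in_others n i j l : In l (others n i j) <-> (l <= n)%nat /\ l <> i /\ l <> j.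
Proof. unfold others. rewrite !filter_In, in_seq, !negb_true_iff, !Nat.eqb_neq. lia. Qed.

Lemma lsum_others (g : nat -> R) n i j : (i <= n)%nat -> (j <= n)%nat -> i <> j ->
  lsum g (seq 0 (S n)) = lsum g (others n i j) + g i + g j.
Proof.
  intros Hi Hj Hij.
  rewrite (lsum_remove g _ i); [| apply seq_NoDup | apply in_seq; lia].
  rewrite (lsum_remove g _ j).
  - unfold others. lra.
  - apply NoDup_filter, seq_NoDup.
  - apply filter_In. split; [apply in_seq; lia|]. apply negb_true_iff, Nat.eqb_neq; auto.
Qed.

Lemma length_filter_mono {T} (P P' : T -> bool) l :
  (forall x, In x l -> P x = true -> P' x = true) ->
  (length (filter P l) <= length (filter P' l))%nat.
Proof.
  induction l as [|x l IH]; simpl; intros H; auto.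
  destruct (P x) eqn:E.
  - rewrite (H x (or_introl eq_refl) E). simpl. apply le_n_S, IH; auto.
  - destruct (P' x); simpl; [apply le_S|]; apply IH; auto.
Qed.

Lemma length_filter_lt {T} (P P' : T -> bool) l :
  (forall x, In x l -> P' x = true -> P x = true) ->
  (exists x, In x l /\ P x = true /\ P' x = false) ->
  (length (filter P' l) < length (filter P l))%nat.
Proof.
  induction l as [|y l IH]; simpl; intros H [x [Hx [H1 H2]]]; [contradiction|].
  destruct Hx as [<-|Hx].
  - rewrite H1, H2. simpl. apply le_n_S, length_filter_mono. auto.
  - destruct (P' y) eqn:E.
    + rewrite (H y (or_introl eq_refl) E). simpl. apply le_n_S, IH; eauto.
    + destruct (P y); simpl; [apply le_S|]; apply IH; eauto.
Qed.

Lemma length_filter_insert (A : nat -> bool) k l : NoDup l -> In k l -> A k = false ->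
  length (filter (fun x => A x || Nat.eqb x k) l) = S (length (filter A l)).
Proof.
  induction l as [|x l IH]; simpl; intros Hnd Hin HA; [contradiction|].
  inversion Hnd as [|? ? Hxl Hnd']; subst. destruct Hin as [<-|Hin].
  - rewrite HA, Nat.eqb_refl. simpl. f_equal. apply f_equal, filter_ext_in.
    intros y Hy. destruct (Nat.eqb_spec y x); [subst; contradiction|]. apply orb_false_r.
  - destruct (Nat.eqb_spec x k); [subst; contradiction|]. rewrite orb_false_r.
    destruct (A x); simpl; rewrite IH; auto.
Qed.

Lemma lsum_exists_above {T} (f : T -> R) c l k :
  lsum f l = INR (length l) * c -> In k l -> f k < c -> exists i, In i l /\ c < f i.
Proof.
  intros Hs Hk Hlt. apply NNPP; intro Hno.
  apply (Rlt_irrefl (lsum f l)). rewrite Hs at 2.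
  apply (lsum_lt_const _ _ _ k); auto. intros x Hx. apply Rnot_lt_le. eauto.
Qed.

(** * Collecting coupons *)

Definition collect (A : nat -> bool) (k : nat) : nat -> bool :=
  fun x => A x || (negb (Nat.eqb x 0) && Nat.eqb x k).

Lemma collect_comm A k l : collect (collect A k) l = collect (collect A l) k.
Proof.
  apply functional_extensionality; intro x; unfold collect.
  destruct (A x), (Nat.eqb x 0), (Nat.eqb x k), (Nat.eqb x l); reflexivity.
Qed.

Lemma collect_idem A k : collect (collect A k) k = collect A k.
Proof.
  apply functional_extensionality; intro x; unfold collect.
  destruct (A x), (Nat.eqb x 0), (Nat.eqb x k); reflexivity.
Qed.

Lemma collect_0 A : collect A 0 = A.
Proof.
  apply functional_extensionality; intro x; unfold collect.
  destruct (Nat.eqb_spec x 0); simpl; rewrite ?orb_false_r; reflexivity.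
Qed.

Lemma collect_other A k x : A x = false -> k <> x -> collect A k x = false.
Proof.
  intros HA Hk. unfold collect. rewrite HA. destruct (Nat.eqb_spec x k); [lia|]. apply andb_false_r.
Qed.

Definition collect_word (A : nat -> bool) (u : list nat) : nat -> bool :=
  fun x => A x || (negb (Nat.eqb x 0) && existsb (Nat.eqb x) u).

Lemma collect_word_nil A : collect_word A [] = A.
Proof.
  apply functional_extensionality; intro x; unfold collect_word; simpl.
  rewrite andb_false_r; apply orb_false_r.
Qed.

Lemma collect_word_snoc A u k : collect_word A (u ++ [k]) = collect (collect_word A u) k.
Proof.
  apply functional_extensionality; intro x; unfold collect_word, collect.
  rewrite existsb_app; simpl. rewrite orb_false_r.
  destruct (A x), (Nat.eqb x 0), (existsb (Nat.eqb x) u), (Nat.eqb x k); reflexivity.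
Qed.

(** [expect n w t F A]: expectation of [F] at [A] together with the coupons of
    [t] independent draws of law [w]; the recursion peels off the last draw. *)
Fixpoint expect (n : nat) (w : nat -> R) (t : nat) (F : (nat -> bool) -> R) (A : nat -> bool) : R :=
  match t with
  | O => F A
  | S t' => expect n w t' (fun B => lsum (fun k => w k * F (collect B k)) (seq 0 (S n))) A
  end.

Lemma expect_S n w t F A :
  expect n w (S t) F A = lsum (fun k => w k * expect n w t F (collect A k)) (seq 0 (S n)).
Proof. revert F A; induction t as [|t IH]; intros F A; [reflexivity|]. apply IH. Qed.

Lemma expect_wext n w w' t F A : (forall k, (k <= n)%nat -> w k = w' k) ->
  expect n w t F A = expect n w' t F A.
Proof.
  intros H; revert A; induction t as [|t IH]; intros A; [reflexivity|].
  rewrite !expect_S. apply lsum_ext_in. intros k Hk. apply in_seq in Hk.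
  rewrite H, IH by lia. reflexivity.
Qed.

Lemma expect_le n w t F G A : (forall k, (k <= n)%nat -> 0 <= w k) ->
  (forall B, F B <= G B) -> expect n w t F A <= expect n w t G A.
Proof.
  intros Hw H; revert A; induction t as [|t IH]; intros A; [apply H|].
  rewrite !expect_S. apply lsum_le. intros k Hk. apply in_seq in Hk.
  apply Rmult_le_compat_l; [apply Hw; lia|apply IH].
Qed.

Lemma expect_nonneg n w t F A : (forall k, (k <= n)%nat -> 0 <= w k) ->
  (forall B, 0 <= F B) -> 0 <= expect n w t F A.
Proof.
  intros Hw HF; revert A; induction t as [|t IH]; intros A; [apply HF|].
  rewrite expect_S. apply lsum_nonneg. intros k Hk. apply in_seq in Hk.
  apply Rmult_le_pos; [apply Hw; lia|apply IH].
Qed.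

Lemma expect_scal n w t c F A : expect n w t (fun B => c * F B) A = c * expect n w t F A.
Proof.
  revert F; induction t as [|t IH]; intros F; [reflexivity|]. cbn [expect]. rewrite <- IH.
  f_equal. apply functional_extensionality; intro B. rewrite <- lsum_scal.
  apply lsum_ext_in; intros; ring.
Qed.

Lemma expect_lsum {T} n w t (G : T -> (nat -> bool) -> R) l A :
  expect n w t (fun B => lsum (fun x => G x B) l) A = lsum (fun x => expect n w t (G x) A) l.
Proof.
  revert G; induction t as [|t IH]; intros G; [reflexivity|]. cbn [expect]. rewrite <- IH.
  f_equal. apply functional_extensionality; intro B. rewrite <- lsum_swap.
  apply lsum_ext_in; intros. symmetry; apply lsum_scal.
Qed.

Lemma expect_antitone n w t F : (forall k, (k <= n)%nat -> 0 <= w k) ->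
  (forall B l, F (collect B l) <= F B) ->
  forall A l, expect n w t F (collect A l) <= expect n w t F A.
Proof.
  intros Hw HF; induction t as [|t IH]; intros A l; [apply HF|].
  rewrite !expect_S. apply lsum_le. intros k Hk. apply in_seq in Hk.
  apply Rmult_le_compat_l; [apply Hw; lia|]. rewrite collect_comm. apply IH.
Qed.

Lemma word_prob_snoc n q u k : word_prob n q (u ++ [k]) = word_prob n q u * draw_prob n q k.
Proof. unfold word_prob. induction u as [|x u IH]; simpl; [lra|]. rewrite IH. lra. Qed.

Lemma words_expect n q t F A :
  lsum (fun u => word_prob n q u * F (collect_word A u)) (words n t) = expect n (draw_prob n q) t F A.
Proof.
  revert F; induction t as [|t IH]; intros F.
  - simpl. rewrite collect_word_nil. unfold word_prob; simpl. lra.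
  - cbn [words expect]. rewrite lsum_flat_map, <- IH.
    apply lsum_ext_in; intros u _. rewrite lsum_map, <- lsum_scal.
    apply lsum_ext_in; intros k _. rewrite word_prob_snoc, collect_word_snoc. ring.
Qed.

(** * Counting coupons and tail probabilities *)

Definition card (n : nat) (A : nat -> bool) : nat := length (filter A (seq 1 n)).

Lemma card_collect_le n A k : (card n A <= card n (collect A k))%nat.
Proof. apply length_filter_mono. intros x _ H. unfold collect. rewrite H. reflexivity. Qed.

Lemma card_collect_new n A k : (1 <= k <= n)%nat -> A k = false ->
  card n (collect A k) = S (card n A).
Proof.
  intros Hk HA. unfold card. rewrite <- length_filter_insert with (k := k); auto.
  - f_equal. apply filter_ext_in. intros x Hx. apply in_seq in Hx. unfold collect.
    destruct (Nat.eqb_spec x 0); [lia|]. reflexivity.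
  - apply seq_NoDup.
  - apply in_seq; lia.
Qed.

Lemma card_collect_word n u : card n (collect_word (fun _ => false) u) = ndistinct n u.
Proof.
  unfold card, ndistinct. f_equal. apply filter_ext_in. intros x Hx. apply in_seq in Hx.
  unfold collect_word. destruct (Nat.eqb_spec x 0); [lia|]. reflexivity.
Qed.

Definition unfinished (n c : nat) (A : nat -> bool) : R := if Nat.ltb (card n A) c then 1 else 0.

Lemma unfinished_bounds n c A : 0 <= unfinished n c A <= 1.
Proof. unfold unfinished. destruct (Nat.ltb _ _); lra. Qed.

Lemma unfinished_collect_le n c A k : unfinished n c (collect A k) <= unfinished n c A.
Proof.
  unfold unfinished. pose proof (card_collect_le n A k).
  destruct (Nat.ltb_spec (card n (collect A k)) c), (Nat.ltb_spec (card n A) c); lra || lia.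
Qed.

Lemma unfinished_sym n c A i j : (1 <= i <= n)%nat -> (1 <= j <= n)%nat ->
  A i = false -> A j = false -> unfinished n c (collect A j) = unfinished n c (collect A i).
Proof. intros. unfold unfinished. rewrite !card_collect_new; auto. Qed.

(** [tail_prob c n q t] is P(T_{c,n}(q) > t). *)
Definition tail_prob (c n : nat) (q : nat -> R) (t : nat) : R :=
  expect n (draw_prob n q) t (unfinished n c) (fun _ => false).

Lemma draw_prob_sum n q : lsum (draw_prob n q) (seq 0 (S n)) = 1.
Proof.
  change (lsum (draw_prob n q) (seq 0 (S n))) with (draw_prob n q 0 + lsum (draw_prob n q) (seq 1 n)).
  rewrite (lsum_ext_in _ q), lsum_seq1.
  - unfold draw_prob; simpl. ring.
  - intros x Hx. apply in_seq in Hx. unfold draw_prob. destruct (Nat.eqb_spec x 0); [lia|auto].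
Qed.

Lemma prob_T_eq_0 c n q : (1 <= c)%nat -> prob_T_eq c n q 0 = 0.
Proof.
  intros Hc. unfold prob_T_eq, ndistinct. simpl. rewrite filter_false.
  destruct c; [lia|]. simpl. lra.
Qed.

Lemma prob_T_eq_S c n q t : prob_T_eq c n q (S t) = tail_prob c n q t - tail_prob c n q (S t).
Proof.
  unfold prob_T_eq, tail_prob. rewrite fold_right_Rplus_map. cbn [words expect].
  rewrite lsum_flat_map, <- !words_expect. unfold Rminus. rewrite <- lsum_opp, <- lsum_plus.
  apply lsum_ext_in. intros u _. rewrite lsum_map.
  set (U := collect_word (fun _ => false) u).
  rewrite <- (Rmult_1_r (word_prob n q u * unfinished n c U)), <- (draw_prob_sum n q).
  rewrite <- !lsum_scal, <- lsum_opp, <- lsum_plus.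
  apply lsum_ext_in. intros k _.
  rewrite removelast_last, word_prob_snoc, <- !card_collect_word, collect_word_snoc. fold U.
  pose proof (card_collect_le n U k). unfold unfinished.
  destruct (Nat.leb_spec c (card n (collect U k))), (Nat.ltb_spec (card n U) c),
    (Nat.ltb_spec (card n (collect U k)) c); simpl; try lia; lra.
Qed.

Lemma expected_partial_sum c n q N : (1 <= c)%nat ->
  sum_f_R0 (fun t => INR t * prob_T_eq c n q t) N
  = sum_f_R0 (tail_prob c n q) N - INR (S N) * tail_prob c n q N.
Proof.
  intros Hc. induction N as [|N IH].
  - simpl. rewrite prob_T_eq_0 by auto. lra.
  - cbn [sum_f_R0]. rewrite IH, prob_T_eq_S, !S_INR. ring.
Qed.

(** * Moving probability between two coupons *)

(** Polynomials with nonnegative coefficients are the model case. *)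
Definition admissible (f : R -> R) : Prop :=
  (forall z, 0 <= z -> 0 <= f z) /\
  (forall x y, 0 <= x -> x <= y -> f x <= f y) /\
  (forall a b a' b', 0 <= b -> b <= b' -> b' <= a' -> a' <= a -> a + b = a' + b' ->
     f a' + f b' <= f a + f b).

Lemma admissible_const c : 0 <= c -> admissible (fun _ => c).
Proof. intros; repeat split; intros; lra. Qed.

Lemma admissible_plus f g : admissible f -> admissible g -> admissible (fun z => f z + g z).
Proof.
  intros [f1 [f2 f3]] [g1 [g2 g3]]; repeat split; intros.
  - specialize (f1 z H); specialize (g1 z H); lra.
  - specialize (f2 x y H H0); specialize (g2 x y H H0); lra.
  - specialize (f3 a b a' b' H H0 H1 H2 H3); specialize (g3 a b a' b' H H0 H1 H2 H3); lra.
Qed.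

Lemma admissible_scal c f : 0 <= c -> admissible f -> admissible (fun z => c * f z).
Proof.
  intros Hc [f1 [f2 f3]]; repeat split; intros.
  - specialize (f1 z H); nra.
  - specialize (f2 x y H H0); nra.
  - specialize (f3 a b a' b' H H0 H1 H2 H3); nra.
Qed.

Lemma admissible_lsum (w : nat -> R) (g : nat -> R -> R) l :
  (forall k, In k l -> 0 <= w k /\ admissible (g k)) ->
  admissible (fun z => lsum (fun k => w k * g k z) l).
Proof.
  induction l as [|k l IH]; intros H; simpl.
  - apply admissible_const; lra.
  - destruct (H k (or_introl eq_refl)). apply admissible_plus.
    + apply admissible_scal; auto.
    + apply IH. intros; apply H; simpl; auto.
Qed.

Lemma admissible_mul_id f : admissible f -> admissible (fun z => z * f z).
Proof.
  intros [f1 [f2 f3]]; repeat split; intros.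
  - specialize (f1 z H); nra.
  - specialize (f2 x y H H0); specialize (f1 x H); nra.
  - specialize (f3 a b a' b' H H0 H1 H2 H3).
    assert (f a' <= f a) by (apply f2; lra).
    assert (f b <= f b') by (apply f2; lra).
    assert (f b <= f a) by (apply f2; lra).
    (* with d = a - a' = b' - b >= 0 the claim is
       a' (f a - f a') + d (f a - f b) >= b' (f b' - f b) *)
    assert (a' * (f a - f a') >= b' * (f a - f a')) by nra.
    assert (b' * (f a - f a') >= b' * (f b' - f b)) by nra.
    assert ((a - a') * (f a - f b) >= 0) by nra.
    replace a with (a' + (a - a')) at 1 by ring.
    replace b with (b' - (a - a')) at 1 by lra.
    nra.
Qed.

Definition upd2 (w : nat -> R) i a j b : nat -> R :=
  fun k => if Nat.eqb k i then a else if Nat.eqb k j then b else w k.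

Lemma upd2_l w i a j b : upd2 w i a j b i = a.
Proof. unfold upd2. rewrite Nat.eqb_refl. reflexivity. Qed.

Lemma upd2_r w i a j b : i <> j -> upd2 w i a j b j = b.
Proof.
  intros Hij. unfold upd2. destruct (Nat.eqb_spec j i); [congruence|]. rewrite Nat.eqb_refl. reflexivity.
Qed.

Lemma upd2_other w i a j b k : k <> i -> k <> j -> upd2 w i a j b k = w k.
Proof.
  intros Hi Hj. unfold upd2.
  destruct (Nat.eqb_spec k i); [lia|]. destruct (Nat.eqb_spec k j); [lia|reflexivity].
Qed.

Lemma expect_S_upd2 n w i a j b t F A : (i <= n)%nat -> (j <= n)%nat -> i <> j ->
  expect n (upd2 w i a j b) (S t) F A =
  lsum (fun k => w k * expect n (upd2 w i a j b) t F (collect A k)) (others n i j)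
  + a * expect n (upd2 w i a j b) t F (collect A i)
  + b * expect n (upd2 w i a j b) t F (collect A j).
Proof.
  intros Hi Hj Hij. rewrite expect_S, (lsum_others _ n i j) by auto.
  rewrite upd2_l, upd2_r by auto. f_equal. f_equal. apply lsum_ext_in. intros k Hk.
  apply in_others in Hk. rewrite upd2_other; auto; lia.
Qed.

Lemma shift_weight_le x y x' y' a b a' b' : 0 <= x' <= x -> 0 <= y -> x + y = x' + y' ->
  a' <= a -> b' <= b -> b <= a -> x' * a' + y' * b' <= x * a + y * b.
Proof. intros. replace y' with (y + (x - x')) by lra. nra. Qed.

Lemma expect_shift_le n w k x y x' y' F : (1 <= k <= n)%nat ->
  (forall l, (l <= n)%nat -> l <> 0%nat -> l <> k -> 0 <= w l) ->
  (forall B l, F (collect B l) <= F B) ->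
  0 <= x' <= x -> 0 <= y -> x + y = x' + y' -> forall t A,
  expect n (upd2 w 0 x' k y') t F A <= expect n (upd2 w 0 x k y) t F A.
Proof.
  intros Hk Hw HF Hx Hy Hs t. induction t as [|t IH]; intros A; [apply Rle_refl|].
  rewrite !expect_S_upd2, !collect_0 by lia.
  rewrite !Rplus_assoc. apply Rplus_le_compat.
  - apply lsum_le. intros l Hl. apply in_others in Hl.
    apply Rmult_le_compat_l; [apply Hw; lia|apply IH].
  - apply shift_weight_le; auto. apply expect_antitone; [|exact HF].
    intros l Hl. unfold upd2.
    destruct (Nat.eqb_spec l 0); [lra|]. destruct (Nat.eqb_spec l k); [lra|]. apply Hw; lia.
Qed.

Section PairTransfer.
Variables (n : nat) (w : nat -> R) (i j : nat) (s : R) (F : (nat -> bool) -> R).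
Hypothesis Hi : (i <= n)%nat.
Hypothesis Hj : (j <= n)%nat.
Hypothesis Hij : i <> j.
Hypothesis Hw : forall k, (k <= n)%nat -> k <> i -> k <> j -> 0 <= w k.
Hypothesis HF_anti : forall B l, F (collect B l) <= F B.
Hypothesis HF_sym : forall A, A i = false -> A j = false -> F (collect A j) = F (collect A i).

(** With [a + b = s] fixed, [K] and [M] do not depend on the weights [a] of [i]
    and [b] of [j]; as [phi A] is admissible, bringing [a] and [b] closer
    together decreases [expect]. *)
Definition pair_repr t (K M : (nat -> bool) -> R) (phi psi : (nat -> bool) -> R -> R) : Prop :=
  forall A, A i = false -> A j = false ->
    admissible (phi A) /\ admissible (psi A) /\
    forall a b, 0 <= a -> 0 <= b -> a + b = s ->
      expect n (upd2 w i a j b) t F A = K A + phi A a + phi A b /\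
      expect n (upd2 w i a j b) t F (collect A i) = M A + psi A a /\
      expect n (upd2 w i a j b) t F (collect A j) = M A + psi A b /\
      expect n (upd2 w i a j b) t F (collect (collect A i) j) = M A.

Lemma pair_repr_0 : pair_repr 0 F (fun A => F (collect (collect A i) j))
  (fun _ _ => 0) (fun A _ => F (collect A i) - F (collect (collect A i) j)).
Proof.
  intros A HAi HAj. split; [apply admissible_const; lra|]. split.
  - apply admissible_const. specialize (HF_anti (collect A i) j). lra.
  - intros a b _ _ _. cbn [expect]. rewrite (HF_sym A HAi HAj). repeat split; ring.
Qed.

Lemma others_collect_fresh A l : A i = false -> A j = false -> In l (others n i j) ->
  collect A l i = false /\ collect A l j = false.
Proof. intros HAi HAj Hl. apply in_others in Hl. split; apply collect_other; auto; lia. Qed.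

Lemma pair_repr_collect t K M phi psi A l a b : pair_repr t K M phi psi ->
  A i = false -> A j = false -> In l (others n i j) -> 0 <= a -> 0 <= b -> a + b = s ->
  let V := expect n (upd2 w i a j b) t F in
  V (collect A l) = K (collect A l) + phi (collect A l) a + phi (collect A l) b /\
  V (collect (collect A i) l) = M (collect A l) + psi (collect A l) a /\
  V (collect (collect A j) l) = M (collect A l) + psi (collect A l) b /\
  V (collect (collect (collect A i) j) l) = M (collect A l).
Proof.
  intros H HAi HAj Hl Ha Hb Hab V. destruct (others_collect_fresh A l HAi HAj Hl) as [H1 H2].
  rewrite (collect_comm A i l), (collect_comm A j l), (collect_comm (collect A i) j l),
    (collect_comm A i l).
  apply (H _ H1 H2); auto.
Qed.

Lemma pair_repr_S t K M phi psi : pair_repr t K M phi psi ->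
  pair_repr (S t)
    (fun A => lsum (fun l => w l * K (collect A l)) (others n i j) + s * M A)
    (fun A => lsum (fun l => w l * M (collect A l)) (others n i j) + s * M A)
    (fun A z => lsum (fun l => w l * phi (collect A l) z) (others n i j) + z * psi A z)
    (fun A z => lsum (fun l => w l * psi (collect A l) z) (others n i j) + z * psi A z).
Proof.
  intros H A HAi HAj. destruct (H A HAi HAj) as (Hphi & Hpsi & HA).
  split; [|split].
  1,2: apply admissible_plus; [|apply admissible_mul_id; auto];
    apply admissible_lsum; intros l Hl; destruct (others_collect_fresh A l HAi HAj Hl) as [H1 H2];
    split; [apply in_others in Hl; apply Hw; lia|apply (H _ H1 H2)].
  intros a b Ha Hb Hab. destruct (HA a b Ha Hb Hab) as (_ & E1 & E2 & E3).
  pose proof (fun l Hl => pair_repr_collect t K M phi psi A l a b H HAi HAj Hl Ha Hb Hab) as Hl.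
  cbv zeta in Hl.
  rewrite <- Hab. repeat split; rewrite expect_S_upd2 by auto;
    rewrite ?collect_idem, ?(collect_comm (collect A i) j i), ?collect_idem, ?(collect_comm A j i).
  - rewrite (lsum_ext_in _ (fun l => w l * K (collect A l)
                                     + (w l * phi (collect A l) a + w l * phi (collect A l) b))).
    2:{ intros l Hl'. destruct (Hl l Hl') as (-> & _). ring. }
    rewrite !lsum_plus, E1, E2. ring.
  - rewrite (lsum_ext_in _ (fun l => w l * M (collect A l) + w l * psi (collect A l) a)).
    2:{ intros l Hl'. destruct (Hl l Hl') as (_ & -> & _). ring. }
    rewrite lsum_plus, E1, E3. ring.
  - rewrite (lsum_ext_in _ (fun l => w l * M (collect A l) + w l * psi (collect A l) b)).
    2:{ intros l Hl'. destruct (Hl l Hl') as (_ & _ & -> & _). ring. }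
    rewrite lsum_plus, E2, E3. ring.
  - rewrite (lsum_ext_in _ (fun l => w l * M (collect A l))).
    2:{ intros l Hl'. destruct (Hl l Hl') as (_ & _ & _ & ->). ring. }
    rewrite E3. ring.
Qed.

Lemma pair_repr_exists t : exists K M phi psi, pair_repr t K M phi psi.
Proof.
  induction t as [|t (K & M & phi & psi & H)].
  - eexists _, _, _, _. apply pair_repr_0.
  - eexists _, _, _, _. apply (pair_repr_S _ _ _ _ _ H).
Qed.

End PairTransfer.

Lemma expect_transfer_le n w i j F a b a' b' :
  (i <= n)%nat -> (j <= n)%nat -> i <> j ->
  (forall k, (k <= n)%nat -> k <> i -> k <> j -> 0 <= w k) ->
  (forall B l, F (collect B l) <= F B) ->
  (forall A, A i = false -> A j = false -> F (collect A j) = F (collect A i)) ->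
  0 <= b -> b <= b' -> b' <= a' -> a' <= a -> a + b = a' + b' -> forall t A,
  A i = false -> A j = false ->
  expect n (upd2 w i a' j b') t F A <= expect n (upd2 w i a j b) t F A.
Proof.
  intros Hi Hj Hij Hw HF_anti HF_sym H0 H1 H2 H3 Hs t A HAi HAj.
  destruct (pair_repr_exists n w i j (a + b) F Hi Hj Hij Hw HF_anti HF_sym t)
    as (K & M & phi & psi & H).
  destruct (H A HAi HAj) as ((_ & _ & Hphi) & _ & E).
  destruct (E a b) as (-> & _); try lra.
  destruct (E a' b') as (-> & _); try lra.
  specialize (Hphi a b a' b' H0 H1 H2 H3 Hs). lra.
Qed.

Lemma lsum_upd2 w i a j b l : NoDup l -> In i l -> In j l -> i <> j ->
  lsum (upd2 w i a j b) l = lsum w l - w i - w j + a + b.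
Proof.
  intros Hnd Hi Hj Hij.
  assert (Hj' : In j (filter (fun x => negb (Nat.eqb x i)) l)).
  { apply filter_In. split; [auto|]. apply negb_true_iff, Nat.eqb_neq; auto. }
  assert (Hnd' : NoDup (filter (fun x => negb (Nat.eqb x i)) l)) by (apply NoDup_filter; auto).
  rewrite (lsum_remove _ l i Hnd Hi), (lsum_remove w l i Hnd Hi).
  rewrite (lsum_remove _ _ j Hnd' Hj'), (lsum_remove w _ j Hnd' Hj').
  rewrite upd2_l, upd2_r by auto.
  rewrite (lsum_ext_in (upd2 w i a j b) w); [ring|].
  intros x Hx. rewrite !filter_In, !negb_true_iff, !Nat.eqb_neq in Hx. apply upd2_other; tauto.
Qed.

(** * Equalizing the coupon probabilities *)

Lemma exists_above_below (w : nat -> R) n mu k :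
  lsum w (seq 1 n) = INR n * mu -> (1 <= k <= n)%nat -> w k <> mu ->
  exists i j, (1 <= i <= n)%nat /\ (1 <= j <= n)%nat /\ mu < w i /\ w j < mu.
Proof.
  intros Hs Hk Hne.
  assert (Hin : In k (seq 1 n)) by (apply in_seq; lia).
  rewrite <- (length_seq n 1) in Hs at 2.
  destruct (Rtotal_order (w k) mu) as [Hlt|[Heq|Hgt]]; [|contradiction|].
  - destruct (lsum_exists_above w mu _ k Hs Hin Hlt) as [i [Hi Hwi]]. apply in_seq in Hi.
    exists i, k. repeat split; auto; lia.
  - assert (Hs' : lsum (fun x => - w x) (seq 1 n) = INR (length (seq 1 n)) * - mu)
      by (rewrite lsum_opp, Hs; ring).
    destruct (lsum_exists_above _ (- mu) _ k Hs' Hin) as [j [Hj Hwj]]; [lra|].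
    apply in_seq in Hj. exists k, j. repeat split; auto; lia || lra.
Qed.

Definition off_mean (n : nat) (mu : R) (w : nat -> R) : nat :=
  length (filter (fun k => if Req_EM_T (w k) mu then false else true) (seq 1 n)).

Section RobinHood.
Variables (n : nat) (mu : R) (F : (nat -> bool) -> R).
Hypothesis HF_anti : forall B l, F (collect B l) <= F B.
Hypothesis HF_sym : forall A i j, (1 <= i <= n)%nat -> (1 <= j <= n)%nat ->
  A i = false -> A j = false -> F (collect A j) = F (collect A i).

(** Move mass from a coupon above the mean to one below it, until one of the
    two reaches the mean. *)
Lemma robin_hood_step w k : (1 <= k <= n)%nat -> w k <> mu ->
  0 <= w 0%nat -> (forall l, (1 <= l <= n)%nat -> 0 <= w l) ->
  lsum w (seq 1 n) = INR n * mu ->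
  exists w', w' 0%nat = w 0%nat /\ (forall l, (1 <= l <= n)%nat -> 0 <= w' l) /\
    lsum w' (seq 1 n) = INR n * mu /\ (off_mean n mu w' < off_mean n mu w)%nat /\
    forall t, expect n w' t F (fun _ => false) <= expect n w t F (fun _ => false).
Proof.
  intros Hk Hne Hw0 Hw Hs.
  destruct (exists_above_below w n mu k Hs Hk Hne) as (i & j & Hi & Hj & Hwi & Hwj).
  assert (Hij : i <> j) by (intro; subst; lra).
  set (d := Rmin (w i - mu) (mu - w j)).
  assert (Hd : d <= w i - mu /\ d <= mu - w j /\ (d = w i - mu \/ d = mu - w j)).
  { unfold d, Rmin. destruct (Rle_dec _ _); lra. }
  assert (Hd0 : 0 < d) by lra.
  set (w' := upd2 w i (w i - d) j (w j + d)).
  assert (Hw'i : w' i = w i - d) by apply upd2_l.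
  assert (Hw'j : w' j = w j + d) by (apply upd2_r; auto).
  assert (Hw'o : forall x, x <> i -> x <> j -> w' x = w x) by (intros; apply upd2_other; auto).
  exists w'. repeat split.
  - apply Hw'o; lia.
  - intros l Hl. specialize (Hw j Hj) as Hwj0.
    destruct (Nat.eq_dec l i) as [->|]; [lra|].
    destruct (Nat.eq_dec l j) as [->|]; [lra|]. rewrite Hw'o; auto.
  - unfold w'. rewrite lsum_upd2, Hs; [ring|apply seq_NoDup|apply in_seq; lia|apply in_seq; lia|auto].
  - apply length_filter_lt.
    + intros x Hx. apply in_seq in Hx.
      destruct (Nat.eq_dec x i) as [->|]; [destruct (Req_EM_T (w i) mu); auto; lra|].
      destruct (Nat.eq_dec x j) as [->|]; [destruct (Req_EM_T (w j) mu); auto; lra|].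
      rewrite Hw'o; auto.
    + destruct Hd as (_ & _ & [Hd|Hd]); [exists i|exists j]; (split; [apply in_seq; lia|]).
      * rewrite Hw'i. destruct (Req_EM_T (w i) mu); [lra|]. destruct (Req_EM_T (w i - d) mu); [auto|lra].
      * rewrite Hw'j. destruct (Req_EM_T (w j) mu); [lra|]. destruct (Req_EM_T (w j + d) mu); [auto|lra].
  - intros t. rewrite (expect_wext n w (upd2 w i (w i) j (w j))).
    2:{ intros x _. destruct (Nat.eq_dec x i) as [->|]; [now rewrite upd2_l|].
        destruct (Nat.eq_dec x j) as [->|]; [now rewrite upd2_r|now rewrite upd2_other]. }
    pose proof (Hw j Hj).
    apply expect_transfer_le; try lia; try lra; try reflexivity.
    + intros x Hx H1 H2. destruct (Nat.eq_dec x 0) as [->|]; [auto|]. apply Hw; lia.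
    + exact HF_anti.
    + intros A HAi HAj. apply HF_sym; auto.
Qed.

Lemma expect_equalize N : forall w, 0 <= w 0%nat -> (forall l, (1 <= l <= n)%nat -> 0 <= w l) ->
  lsum w (seq 1 n) = INR n * mu -> (off_mean n mu w <= N)%nat -> forall t,
  expect n (fun k => if Nat.eqb k 0 then w 0%nat else mu) t F (fun _ => false)
  <= expect n w t F (fun _ => false).
Proof.
  induction N as [|N IH]; intros w Hw0 Hw Hs HN t;
    destruct (classic (exists k, (1 <= k <= n)%nat /\ w k <> mu)) as [[k [Hk Hne]]|Hall].
  2,4: right; apply expect_wext; intros k Hk; destruct (Nat.eqb_spec k 0) as [->|]; [auto|];
    apply NNPP; intro H; apply Hall; exists k; split; [lia|auto].
  all: destruct (robin_hood_step w k Hk Hne Hw0 Hw Hs) as (w' & H0 & Hw' & Hs' & Hlt & Hle).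
  - lia.
  - rewrite <- H0. apply Rle_trans with (expect n w' t F (fun _ => false)); auto.
    apply IH; [rewrite H0| | |lia]; auto.
Qed.

End RobinHood.

Lemma tail_prob_equalize c n p mu t :
  (forall i, (1 <= i <= n)%nat -> 0 <= p i) -> sumR p n <= 1 -> INR n * mu = sumR p n ->
  tail_prob c n (fun _ => mu) t <= tail_prob c n p t.
Proof.
  intros Hp Hs Hmu. unfold tail_prob.
  assert (Hmid : forall k, (1 <= k <= n)%nat -> draw_prob n p k = p k).
  { intros k Hk. unfold draw_prob. destruct (Nat.eqb_spec k 0); [lia|reflexivity]. }
  rewrite (expect_wext n _ (fun k => if Nat.eqb k 0 then draw_prob n p 0%nat else mu)).
  - apply (expect_equalize n mu _ (unfinished_collect_le n c)) with (N := off_mean n mu (draw_prob n p)).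
    + intros A i j Hi Hj HAi HAj. apply unfinished_sym; auto.
    + unfold draw_prob; simpl. lra.
    + intros l Hl. rewrite Hmid; auto.
    + rewrite (lsum_ext_in _ p), lsum_seq1; auto. intros x Hx. apply in_seq in Hx. apply Hmid; lia.
    + lia.
  - intros k _. unfold draw_prob. destruct (Nat.eqb k 0); [|reflexivity].
    rewrite sumR_const, Hmu. reflexivity.
Qed.

(** Interpolates between [v] ([m = 0]) and [u] ([m = n]); coupon [0] takes the remaining mass. *)
Definition fill_weights (n : nat) (mu : R) (m : nat) : nat -> R :=
  fun k => if Nat.eqb k 0 then 1 - INR m / INR n - (INR n - INR m) * mu
           else if Nat.leb k m then 1 / INR n else mu.

Lemma expect_fill_S n c mu m t : (m < n)%nat -> 0 <= mu -> INR n * mu <= 1 ->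
  expect n (fill_weights n mu (S m)) t (unfinished n c) (fun _ => false)
  <= expect n (fill_weights n mu m) t (unfinished n c) (fun _ => false).
Proof.
  intros Hm Hmu Hmu1.
  assert (HN : 0 < INR n) by (apply lt_0_INR; lia).
  assert (HmN : INR (S m) <= INR n) by (apply le_INR; lia).
  rewrite S_INR in *.
  assert (Hmu' : mu <= 1 / INR n) by (apply Rmult_le_reg_l with (INR n); [lra|]; field_simplify; lra).
  set (fw := fill_weights n mu).
  rewrite (expect_wext n (fw m) (upd2 (fw m) 0 (fw m 0%nat) (S m) mu)).
  2:{ intros k _. unfold upd2, fw, fill_weights. destruct (Nat.eqb_spec k 0) as [->|]; [reflexivity|].
      destruct (Nat.eqb_spec k (S m)) as [->|]; [|reflexivity].
      destruct (Nat.leb_spec (S m) m); [lia|reflexivity]. }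
  rewrite (expect_wext n (fw (S m)) (upd2 (fw m) 0 (fw (S m) 0%nat) (S m) (1 / INR n))).
  2:{ intros k _. unfold upd2, fw, fill_weights. destruct (Nat.eqb_spec k 0) as [->|]; [reflexivity|].
      destruct (Nat.eqb_spec k (S m)) as [->|]; [rewrite Nat.leb_refl; reflexivity|].
      destruct (Nat.leb_spec k m), (Nat.leb_spec k (S m)); try lia; reflexivity. }
  unfold fw at 2 4, fill_weights. rewrite !Nat.eqb_refl, !S_INR.
  apply expect_shift_le; try lia.
  - intros l Hl H0 H1. unfold fw, fill_weights. destruct (Nat.eqb_spec l 0); [lia|].
    destruct (Nat.leb l m); [|lra]. apply Rlt_le, Rdiv_lt_0_compat; lra.
  - apply unfinished_collect_le.
  - split.
    + assert (INR n * (1 - (INR m + 1) / INR n - (INR n - (INR m + 1)) * mu)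
              = (INR n - (INR m + 1)) * (1 - INR n * mu)) by (field; lra).
      apply Rmult_le_reg_l with (INR n); [lra|]. rewrite Rmult_0_r, H. nra.
    + assert (INR n * (1 - (INR m + 1) / INR n - (INR n - (INR m + 1)) * mu)
              = INR n * (1 - INR m / INR n - (INR n - INR m) * mu) - (1 - INR n * mu)) by (field; lra).
      apply Rmult_le_reg_l with (INR n); [lra|]. rewrite H. lra.
  - exact Hmu.
  - field. lra.
Qed.

Lemma tail_prob_fill c n mu t : (1 <= n)%nat -> 0 <= mu -> INR n * mu <= 1 ->
  tail_prob c n (fun _ => 1 / INR n) t <= tail_prob c n (fun _ => mu) t.
Proof.
  intros Hn Hmu Hmu1. assert (HN : 0 < INR n) by (apply lt_0_INR; lia).
  unfold tail_prob.
  rewrite (expect_wext n _ (fill_weights n mu n)),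
    (expect_wext n (draw_prob n (fun _ => mu)) (fill_weights n mu 0)).
  - assert (Hind : forall m, (m <= n)%nat ->
      expect n (fill_weights n mu m) t (unfinished n c) (fun _ => false)
      <= expect n (fill_weights n mu 0) t (unfinished n c) (fun _ => false)).
    { induction m as [|m IH]; intros Hm; [apply Rle_refl|].
      eapply Rle_trans; [apply expect_fill_S; auto; lia|]. apply IH; lia. }
    apply Hind; lia.
  - intros k _. unfold draw_prob, fill_weights. rewrite sumR_const.
    destruct (Nat.eqb_spec k 0); [simpl; field; lra|]. destruct (Nat.leb_spec k 0); [lia|reflexivity].
  - intros k Hk. unfold draw_prob, fill_weights. rewrite sumR_const.
    destruct (Nat.eqb_spec k 0); [field; lra|]. destruct (Nat.leb_spec k n); [reflexivity|lia].
Qed.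

(** * Geometric decay of the tails *)

Lemma INR_S_mul_pow_bounded rho : 0 < rho < 1 -> forall N, INR (S N) * rho ^ N <= 1 + / (/ rho - 1).
Proof.
  intros Hrho N. set (h := / rho - 1).
  assert (Hh : 0 < h).
  { unfold h. assert (1 < / rho) by (rewrite <- Rinv_1; apply Rinv_lt_contravar; lra). lra. }
  assert (Hpow : rho ^ N * (1 + INR N * h) <= 1).
  { assert (1 + h = / rho) as Hinv by (unfold h; ring).
    pose proof (poly N h Hh) as HB. rewrite Hinv, pow_inv in HB.
    assert (0 < rho ^ N) by (apply pow_lt; lra).
    apply Rmult_le_reg_r with (/ rho ^ N); [apply Rinv_0_lt_compat; lra|].
    rewrite Rmult_1_l, Rmult_comm, <- Rmult_assoc, Rinv_l by lra. lra. }
  assert (0 <= rho ^ N) by (apply pow_le; lra).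
  assert (0 < / h) by (apply Rinv_0_lt_compat; lra).
  pose proof (pos_INR N). rewrite S_INR.
  assert (INR N + 1 <= (1 + / h) * (1 + INR N * h)).
  { replace ((1 + / h) * (1 + INR N * h)) with (1 + INR N * h + / h + INR N * (h * / h)) by ring.
    rewrite Rinv_r by lra. nra. }
  apply Rle_trans with ((1 + / h) * (rho ^ N * (1 + INR N * h))); [nra|].
  rewrite <- (Rmult_1_r (1 + / h)) at 2. apply Rmult_le_compat_l; lra.
Qed.

Lemma INR_S_mul_pow_cv0 r : 0 <= r < 1 -> Un_cv (fun N => INR (S N) * r ^ N) 0.
Proof.
  intros Hr eps Heps. set (rho := (1 + r) / 2). set (C := 1 + / (/ rho - 1)).
  assert (Hrho : 0 < rho < 1) by (unfold rho; lra).
  assert (HC : 0 < C).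
  { pose proof (INR_S_mul_pow_bounded rho Hrho 0) as H0. fold C in H0. simpl in H0. lra. }
  destruct (pow_lt_1_zero rho ltac:(rewrite Rabs_pos_eq by lra; lra) (eps / C)) as [N HN].
  { apply Rdiv_lt_0_compat; lra. }
  exists N. intros m Hm. unfold Rdist. rewrite Rminus_0_r.
  specialize (HN m Hm). rewrite Rabs_pos_eq in HN by (apply pow_le; lra).
  assert (Hrm : r ^ m <= rho ^ m * rho ^ m).
  { rewrite <- Rpow_mult_distr. apply pow_incr. unfold rho. nra. }
  pose proof (INR_S_mul_pow_bounded rho Hrho m). fold C in H.
  assert (0 <= rho ^ m) by (apply pow_le; lra). pose proof (pos_INR (S m)).
  rewrite Rabs_pos_eq by (apply Rmult_le_pos; [lra|apply pow_le; lra]).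
  apply Rle_lt_trans with (C * rho ^ m); [nra|].
  apply Rmult_lt_reg_r with (/ C); [apply Rinv_0_lt_compat; lra|].
  replace (C * rho ^ m * / C) with (rho ^ m) by (field; lra). exact HN.
Qed.

Lemma geometric_dominated (x : nat -> R) K r : 0 <= r < 1 -> 0 <= K ->
  (forall t, 0 <= x t <= K * r ^ t) ->
  (exists l, Un_cv (sum_f_R0 x) l) /\ Un_cv (fun N => INR (S N) * x N) 0.
Proof.
  intros Hr HK Hx. split.
  - assert (HG : { l | Un_cv (sum_f_R0 (fun t => K * r ^ t)) l }).
    { exists (K * / (1 - r)). intros eps Heps.
      assert (HGP : Un_cv (fun N => K * sum_f_R0 (fun t => 1 * r ^ t) N) (K * / (1 - r))).
      { apply (CV_mult (fun _ => K)).
        - intros e He; exists 0%nat; intros; unfold Rdist. rewrite Rminus_diag, Rabs_R0; lra.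
        - apply GP_infinite. rewrite Rabs_pos_eq; lra. }
      destruct (HGP eps Heps) as [N HN]. exists N. intros m Hm.
      specialize (HN m Hm). rewrite scal_sum in HN.
      erewrite sum_eq; [exact HN|]. intros i _. simpl. ring. }
    destruct (Rseries_CV_comp x _ Hx HG) as [l Hl]. exists l. exact Hl.
  - intros eps Heps.
    destruct (INR_S_mul_pow_cv0 r Hr (eps / (K + 1))) as [N HN]; [apply Rdiv_lt_0_compat; lra|].
    exists N. intros m Hm. specialize (HN m Hm). specialize (Hx m).
    unfold Rdist in *. rewrite Rminus_0_r in *. pose proof (pos_INR (S m)).
    assert (0 <= r ^ m) by (apply pow_le; lra).
    rewrite Rabs_pos_eq in HN by (apply Rmult_le_pos; lra).
    rewrite Rabs_pos_eq by (apply Rmult_le_pos; lra).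
    apply Rle_lt_trans with (K * (INR (S m) * r ^ m)); [nra|].
    apply Rle_lt_trans with ((K + 1) * (INR (S m) * r ^ m)); [nra|].
    apply Rmult_lt_reg_r with (/ (K + 1)); [apply Rinv_0_lt_compat; lra|].
    replace ((K + 1) * (INR (S m) * r ^ m) * / (K + 1)) with (INR (S m) * r ^ m) by (field; lra).
    replace (eps * / (K + 1)) with (eps / (K + 1)) by reflexivity. exact HN.
Qed.

Definition missing (i : nat) (A : nat -> bool) : R := if A i then 0 else 1.

Lemma lsum_missing_card (A : nat -> bool) l :
  lsum (fun i => missing i A) l + INR (length (filter A l)) = INR (length l).
Proof.
  induction l as [|x l IH]; [simpl; lra|].
  simpl lsum. simpl length. simpl filter. unfold missing at 1.
  destruct (A x); simpl length; rewrite !S_INR; lra.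
Qed.

Lemma unfinished_le_missing n c A : (c <= n)%nat ->
  unfinished n c A <= lsum (fun i => missing i A) (seq 1 n).
Proof.
  intros Hc. pose proof (lsum_missing_card A (seq 1 n)) as H. rewrite length_seq in H.
  fold (card n A) in H. unfold unfinished. destruct (Nat.ltb_spec (card n A) c).
  - assert (INR (S (card n A)) <= INR n) by (apply le_INR; lia). rewrite S_INR in *. lra.
  - apply lsum_nonneg. intros i _. unfold missing. destruct (A i); lra.
Qed.

Lemma missing_step n w i B : (1 <= i <= n)%nat -> lsum w (seq 0 (S n)) = 1 ->
  lsum (fun k => w k * missing i (collect B k)) (seq 0 (S n)) = (1 - w i) * missing i B.
Proof.
  intros Hi Hw. unfold missing. destruct (B i) eqn:HB.
  - rewrite (lsum_ext_in _ (fun _ => 0)), lsum_const; [ring|].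
    intros k _. unfold collect. rewrite HB. simpl. ring.
  - assert (Hin : In i (seq 0 (S n))) by (apply in_seq; lia).
    rewrite (lsum_remove _ _ i (seq_NoDup _ _) Hin).
    rewrite (lsum_remove w _ i (seq_NoDup _ _) Hin) in Hw.
    rewrite (lsum_ext_in _ w (filter _ _)).
    + unfold collect at 1. rewrite HB, Nat.eqb_refl.
      destruct (Nat.eqb_spec i 0); [lia|]. cbn [negb andb orb]. lra.
    + intros k Hk. apply filter_In in Hk. rewrite negb_true_iff, Nat.eqb_neq in Hk.
      rewrite collect_other; [ring|auto|apply Hk].
Qed.

Lemma expect_missing n w i t A : (1 <= i <= n)%nat -> lsum w (seq 0 (S n)) = 1 ->
  expect n w t (missing i) A = (1 - w i) ^ t * missing i A.
Proof.
  intros Hi Hw. induction t as [|t IH]; [simpl; ring|].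
  cbn [expect]. rewrite (functional_extensionality _ _ (fun B => missing_step n w i B Hi Hw)).
  rewrite expect_scal, IH. simpl. ring.
Qed.

Lemma exists_pow_base (f : nat -> R) l : (forall i, In i l -> 0 < f i < 1) ->
  exists r, 0 <= r < 1 /\ forall i, In i l -> 1 - f i <= r.
Proof.
  induction l as [|x l IH]; intros H.
  - exists 0. split; [lra|]. intros i [].
  - destruct IH as [r [Hr Hb]]; [intros; apply H; simpl; auto|].
    exists (Rmax r (1 - f x)). specialize (H x (or_introl eq_refl)). split.
    + unfold Rmax; destruct (Rle_dec _ _); lra.
    + intros i [<-|Hi]; [apply Rmax_r|]. apply Rle_trans with r; [auto|apply Rmax_l].
Qed.

(** Union bound over the [n] coupons. *)
Lemma tail_prob_geometric c n p : (c <= n)%nat ->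
  (forall i, (1 <= i <= n)%nat -> 0 < p i < 1) -> sumR p n <= 1 ->
  exists r, 0 <= r < 1 /\ forall t, tail_prob c n p t <= INR n * r ^ t.
Proof.
  intros Hc Hp Hs. destruct (exists_pow_base p (seq 1 n)) as [r [Hr Hb]].
  { intros i Hi; apply Hp; apply in_seq in Hi; lia. }
  exists r. split; auto. intros t. unfold tail_prob.
  assert (Hmid : forall k, (1 <= k <= n)%nat -> draw_prob n p k = p k).
  { intros k Hk. unfold draw_prob. destruct (Nat.eqb_spec k 0); [lia|reflexivity]. }
  eapply Rle_trans.
  { apply (expect_le _ _ _ _ (fun B => lsum (fun i => missing i B) (seq 1 n))).
    - intros k Hk. destruct (Nat.eq_dec k 0) as [->|]; [unfold draw_prob; simpl; lra|].
      rewrite Hmid by lia. specialize (Hp k ltac:(lia)); lra.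
    - intros B. apply unfinished_le_missing; auto. }
  rewrite expect_lsum.
  replace (INR n * r ^ t) with (lsum (fun _ => r ^ t) (seq 1 n)) by (rewrite lsum_const, length_seq; ring).
  apply lsum_le. intros i Hi. apply in_seq in Hi.
  rewrite expect_missing, Hmid by (apply draw_prob_sum || lia).
  unfold missing. simpl. rewrite Rmult_1_r.
  apply pow_incr. specialize (Hp i ltac:(lia)). specialize (Hb i ltac:(apply in_seq; lia)). lra.
Qed.

Lemma expected_T_of_tails c n q K r : (1 <= c)%nat -> 0 <= r < 1 -> 0 <= K ->
  (forall t, 0 <= tail_prob c n q t <= K * r ^ t) ->
  exists E, expected_T_is c n q E /\ Un_cv (sum_f_R0 (tail_prob c n q)) E.
Proof.
  intros Hc Hr HK Hq.
  destruct (geometric_dominated _ K r Hr HK Hq) as [[E HE] Hbd].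
  exists E. split; [|exact HE].
  intros eps Heps. destruct (CV_minus _ _ _ _ HE Hbd eps Heps) as [N HN].
  exists N. intros m Hm. rewrite expected_partial_sum by exact Hc.
  rewrite <- (Rminus_0_r E). apply HN, Hm.
Qed.

Lemma sumR_nonneg f n : (forall i, (1 <= i <= n)%nat -> 0 <= f i) -> 0 <= sumR f n.
Proof.
  intros Hf. rewrite <- lsum_seq1. apply lsum_nonneg. intros i Hi. apply in_seq in Hi. apply Hf; lia.
Qed.

Lemma tail_prob_nonneg c n q t : (forall i, (1 <= i <= n)%nat -> 0 <= q i) -> sumR q n <= 1 ->
  0 <= tail_prob c n q t.
Proof.
  intros Hq Hs. apply expect_nonneg; [|intros; apply unfinished_bounds].
  intros k Hk. unfold draw_prob. destruct (Nat.eqb_spec k 0); [lra|]. apply Hq; lia.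
Qed.

Lemma sum_tail_prob_le c n q1 q2 E1 E2 : (forall t, tail_prob c n q1 t <= tail_prob c n q2 t) ->
  Un_cv (sum_f_R0 (tail_prob c n q1)) E1 -> Un_cv (sum_f_R0 (tail_prob c n q2)) E2 -> E2 >= E1.
Proof.
  intros Hle H1 H2. apply Rle_ge; refine (Rle_cv_lim _ H1 H2). intros N. apply sum_Rle. auto.
Qed.

Theorem theorem2 (n c : nat) (p : nat -> R) :
  (1 <= n)%nat ->
  (1 <= c <= n)%nat ->
  (forall i : nat, (1 <= i <= n)%nat -> 0 < p i < 1) ->
  sumR p n <= 1 ->
  let p0 := 1 - sumR p n in
  let v := fun _ : nat => (1 - p0) / INR n in
  let u := fun _ : nat => 1 / INR n in
  exists Ep Ev Eu : R,
    expected_T_is c n p Ep /\ expected_T_is c n v Ev /\ expected_T_is c n u Eu /\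
    Ep >= Ev /\ Ev >= Eu.
Proof.
  intros Hn Hc Hp Hs p0 v u.
  assert (HN : 0 < INR n) by (apply lt_0_INR; lia).
  assert (Hp0 : forall i, (1 <= i <= n)%nat -> 0 <= p i) by (intros i Hi; specialize (Hp i Hi); lra).
  pose proof (sumR_nonneg p n Hp0).
  assert (Hmu : INR n * ((1 - p0) / INR n) = sumR p n) by (unfold p0; field; lra).
  assert (Hvp : forall t, tail_prob c n v t <= tail_prob c n p t)
    by (intros t; apply (tail_prob_equalize c n p ((1 - p0) / INR n)); auto).
  assert (Huv : forall t, tail_prob c n u t <= tail_prob c n v t).
  { intros t. apply (tail_prob_fill c n ((1 - p0) / INR n)); [lia| |lra].
    apply Rmult_le_reg_l with (INR n); lra. }
  assert (Hu0 : forall t, 0 <= tail_prob c n u t).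
  { intros t. apply tail_prob_nonneg; [intros; apply Rlt_le, Rdiv_lt_0_compat; lra|].
    unfold u. rewrite sumR_const. right. field. lra. }
  destruct (tail_prob_geometric c n p) as [r [Hr Hgeo]]; [lia|auto|auto|].
  assert (Hexp : forall q, (forall t, tail_prob c n u t <= tail_prob c n q t <= tail_prob c n p t) ->
            exists E, expected_T_is c n q E /\ Un_cv (sum_f_R0 (tail_prob c n q)) E).
  { intros q Hq. apply (expected_T_of_tails c n q (INR n) r); [lia|auto|lra|].
    intros t. specialize (Hq t). specialize (Hu0 t). specialize (Hgeo t). lra. }
  destruct (Hexp p) as [Ep [HEp HSp]]; [intros t; specialize (Hvp t); specialize (Huv t); lra|].
  destruct (Hexp v) as [Ev [HEv HSv]]; [intros t; specialize (Hvp t); specialize (Huv t); lra|].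
  destruct (Hexp u) as [Eu [HEu HSu]]; [intros t; specialize (Hvp t); specialize (Huv t); lra|].
  exists Ep, Ev, Eu. repeat split; auto.
  - exact (sum_tail_prob_le c n v p Ev Ep Hvp HSv HSp).
  - exact (sum_tail_prob_le c n u v Eu Ev Huv HSu HSv).
Qed.
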